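(* There is an absolute constant $C$ and a deterministic adaptive procedure with the following property. Let $G=(V,E)$ be a connected graph on $n\ge 2$ vertices with maximum degree $\Delta\ge 2$, $s\in V$, $\mathcal{T}$ the layering tree of $G$ with respect to $s$, and $\ell\ge \ell(\mathcal{T})$ an integer. Let $k\ge 0$ and $i=k+\ell+2$. Given $\ell$, the layers $L_0,L_1,\dots$, the graph $G_i$ and the tree $\mathcal{T}_k$, and access to the shortest-path distance oracle of $G$, the procedure computes $G_{i+1}$ using at most $C\cdot|L_i|\left(\Delta^{\ell+2}\log n+\Delta^{4\ell+8}\right)$ queries.
   Context: Shortest-path distance oracle: given $u,v\in V$ it returns $d_G(u,v)$; each call is one query, chosen adaptively. For a connected graph $G$ and root $s\in V(G)$, the BFS layers are $L_i=\{v: d_G(s,v)=i\}$ for $i\ge 0$, with $L_{\le k}=L_0\cup\dots\cup L_k$, $L_{\ge k}=\bigcup_{j\ge k}L_j$, $L_{-1}=\emptyset$. For each $i\ge 0$, let $S_i^1,\dots,S_i^{s_i}$ be the connected components of $G\setminus L_{\le i-1}$ (i.e. of $G[L_{\ge i}]$), and let $P_i^j=S_i^j\cap L_i$; the nonempty sets $P_i^j$ are the parts at layer (depth) $i$, and the set $\mathcal{P}$ of all parts over all layers partitions $V(G)$. The layering tree $\mathcal{T}=(\mathcal{P},\mathcal{E})$ has the parts as vertices, with $(P,P')\in\mathcal{E}$ iff some $u\in P$, $u'\in P'$ are adjacent in $G$. Its length is $\ell(\mathcal{T})=\max_{P\in\mathcal{P}}\max_{u,v\in P} d_G(u,v)$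 (distances measured in $G$). $G_i=G[L_{\le i-1}]$ is the subgraph induced by the first $i$ layers, and $\mathcal{T}_k$ is the subtree of $\mathcal{T}$ induced by the parts at layers $0,1,\dots,k-1$. *)

From Stdlib Require Import Reals.
From mathcomp Require Import all_boot.
Set Implicit Arguments. Unset Strict Implicit. Unset Printing Implicit Defensive.

Section Graphs.
Variable V : finType.
Variable e : rel V.

Definition simple_graph := symmetric e /\ irreflexive e.
Definition connected_graph := forall u v : V, connect e u v.

Fixpoint ball (u : V) (k : nat) : {set V} :=
  match k with
  | 0 => [set u]
  | k'.+1 => ball u k' :|: [set y | [exists x in ball u k', e x y]]
  end.

(* shortest-path distance d_G(u,v) (correct whenever v is reachable from u,
   in particular in a connected graph, where d_G(u,v) < #|V|) *)
Definition gdist (u v : V) : nat := find (fun k => v \in ball u k) (iota 0 #|V|).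

Definition maxdeg : nat := \max_(v : V) #|[set u | e v u]|.

Variable s : V.

Definition layer (i : nat) : {set V} := [set v | gdist s v == i].
Definition layer_le (i : nat) : {set V} := [set v | gdist s v <= i].
Definition layer_lt (i : nat) : {set V} := [set v | gdist s v < i].
Definition layer_ge (i : nat) : {set V} := [set v | i <= gdist s v].

Definition adj_ge (i : nat) : rel V :=
  fun x y => [&& e x y, x \in layer_ge i & y \in layer_ge i].

Definition comps (i : nat) : {set {set V}} :=
  [set [set y | connect (adj_ge i) x y] | x in layer_ge i].

Definition parts (i : nat) : {set {set V}} :=
  [set S :&: layer i | S in comps i] :\ set0.

Definition tree_edge (P Q : {set V}) : bool :=
  [exists u in P, exists v in Q, e u v].

Definition Tk_parts (k : nat) : {set {set V}} := \bigcup_(i < k) parts i.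
Definition Tk_edge (k : nat) : rel {set V} :=
  fun P Q => [&& P \in Tk_parts k, Q \in Tk_parts k & tree_edge P Q].

(* G_i = G[L_{<= i-1}] (as an adjacency relation on V, vertex set layer_lt i) *)
Definition G_ind (i : nat) : rel V :=
  fun x y => [&& e x y, x \in layer_lt i & y \in layer_lt i].

Definition tree_length_le (l : nat) : Prop :=
  forall (i : nat) (P : {set V}) (u v : V),
    P \in parts i -> u \in P -> v \in P -> gdist u v <= l.
End Graphs.

(* Deterministic adaptive query procedures (decision trees) over the oracle
   V -> V -> nat, returning a value of type A. *)
Inductive QAlg (V A : Type) : Type :=
  | Ret : A -> QAlg V A
  | Ask : V -> V -> (nat -> QAlg V A) -> QAlg V A.
Arguments Ret {V A}.
Arguments Ask {V A}.

Fixpoint run (V A : Type) (o : V -> V -> nat) (t : QAlg V A) : A * nat :=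
  match t with
  | Ret a => (a, 0)
  | Ask u v f => let r := run o (f (o u v)) in (r.1, r.2.+1)
  end.

Record Input (n : nat) := mkInput {
  in_ell : nat;
  in_k : nat;
  in_layers : nat -> {set 'I_n};
  in_Gi : rel 'I_n;
  in_Tparts : {set {set 'I_n}};
  in_Tedge : rel {set 'I_n}
}.

Definition Procedure := forall n : nat, Input n -> QAlg 'I_n (rel 'I_n).

Definition query_bound (C : R) (n Li D l : nat) : R :=
  Rmult (Rmult C (INR Li))
        (Rplus (Rmult (INR (D ^ (l + 2))) (ln (INR n))) (INR (D ^ (4 * l + 8)))).

From Stdlib Require Import Reals Lra.
From mathcomp Require Import all_boot zify.

(* Every edge of G_{i+1} not already in G_i joins a vertex v of L_i to a vertex of its region
   R(v), the part of L_{i-1} lying in the component of G[L_{>= k-1}] containing v, or to a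
   vertex w of L_i with R(w) = R(v).  The part of T_k above v at layer k-1 has diameter at most
   l, so R(v) lies in a ball of radius 2l+2 and |R(v)| < D^(2l+3); the vertices w are neighbours
   of R(v).  Once every region is known, querying all these candidate pairs costs
   O(D^(4l+8)) per vertex of L_i.

   A vertex y of depth < k lies above v exactly when d(y,v) + d(s,y) = i, which one query
   decides.  R(v) is found by a descent in T_k: take the deepest part whose subtree contains
   more than half of the current candidates and query its at most D^(l+2) children.  If a child
   lies above v, the candidates shrink to its subtree, which holds at most half of them since
   the child is deeper; otherwise v is outside the subtree and fewer than half remain.  Hence
   O(log n) rounds suffice. *)

Set Implicit Arguments. Unset Strict Implicit. Unset Printing Implicit Defensive.

Fixpoint bindQ (V A B : Type) (m : QAlg V A) (f : A -> QAlg V B) : QAlg V B :=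
  match m with
  | Ret a => f a
  | Ask u v g => Ask u v (fun d => bindQ (g d) f)
  end.

Lemma run_bind (V A B : Type) (o : V -> V -> nat) (m : QAlg V A) (f : A -> QAlg V B) :
  run o (bindQ m f) = ((run o (f (run o m).1)).1, (run o m).2 + (run o (f (run o m).1)).2).
Proof.
elim: m => [a|u v g IH] /=; first by case: (run o (f a)).
by rewrite IH.
Qed.

Fixpoint mapQ (V X Y : Type) (f : X -> QAlg V Y) (xs : seq X) : QAlg V (seq Y) :=
  match xs with
  | [::] => Ret [::]
  | x :: xs' => bindQ (f x) (fun y => bindQ (mapQ f xs') (fun ys => Ret (y :: ys)))
  end.

Lemma run_mapQ (V X Y : Type) (o : V -> V -> nat) (f : X -> QAlg V Y) xs :
  run o (mapQ f xs) =
  ([seq (run o (f x)).1 | x <- xs], sumn [seq (run o (f x)).2 | x <- xs]).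
Proof. by elim: xs => [|x xs IH] //=; rewrite !run_bind /= IH /= !addn0. Qed.

Fixpoint ask_all (V : Type) (ps : seq (V * V)) : QAlg V (seq ((V * V) * nat)) :=
  match ps with
  | [::] => Ret [::]
  | p :: ps' => Ask p.1 p.2 (fun d => bindQ (ask_all ps') (fun ds => Ret ((p, d) :: ds)))
  end.

Lemma run_ask_all (V : Type) (o : V -> V -> nat) ps :
  run o (ask_all ps) = ([seq (p, o p.1 p.2) | p <- ps], size ps).
Proof. by elim: ps => [|p ps IH] //=; rewrite run_bind IH /= addn0. Qed.

Definition ask_filter (V : Type) (P : V -> V -> nat -> bool) (ps : seq (V * V)) :
    QAlg V (seq (V * V)) :=
  bindQ (ask_all ps) (fun ans => Ret [seq a.1 | a <- ans & P a.1.1 a.1.2 a.2]).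

Lemma run_ask_filter (V : Type) (o : V -> V -> nat) P ps :
  run o (ask_filter P ps) = ([seq p <- ps | P p.1 p.2 (o p.1 p.2)], size ps).
Proof.
rewrite run_bind run_ask_all /= addn0; congr (_, _).
by elim: ps => [|p ps IH] //=; case: ifP; rewrite /= IH.
Qed.

Lemma sumn_map_leq (T : eqType) (xs : seq T) (F : T -> nat) B :
  {in xs, forall x, F x <= B} -> sumn [seq F x | x <- xs] <= size xs * B.
Proof.
elim: xs => [|x xs IH] //= le_FB; rewrite mulSn leq_add ?le_FB ?mem_head //.
by apply: IH => y y_in; rewrite le_FB // in_cons y_in orbT.
Qed.

Lemma trunc_log2_leq m : trunc_log 2 m <= m.
Proof.
case: (posnP m) => [->|m_gt0]; first by rewrite trunc_log0.
exact/ltnW/(leq_trans (ltn_expl _ (isT : 1 < 2)))/(trunc_logP (isT : 1 < 2)).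
Qed.

Lemma trunc_log2_half m m' : 0 < m' -> 2 * m' <= m -> trunc_log 2 m' < trunc_log 2 m.
Proof.
move=> m'_gt0 le_m'm; apply: trunc_log_max => //.
by rewrite expnS; apply: leq_trans le_m'm; rewrite leq_mul2l trunc_logP.
Qed.

Section Distances.
Variables (V : finType) (e : rel V).

Definition nbr (A : {set V}) : {set V} := [set y | [exists x in A, e x y]].

Lemma ballS u k : ball e u k.+1 = ball e u k :|: nbr (ball e u k).
Proof. by []. Qed.

Lemma nbrS (A B : {set V}) : A \subset B -> nbr A \subset nbr B.
Proof.
move=> sAB; apply/subsetP=> y; rewrite !inE => /existsP [x /andP [xA exy]].
by apply/existsP; exists x; rewrite (subsetP sAB).
Qed.

Lemma sub_ball u k k' : k <= k' -> ball e u k \subset ball e u k'.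
Proof.
move=> /subnK <-; elim: (k' - k) => [|d IH] //=.
exact: subset_trans IH (subsetUl _ _).
Qed.

Lemma ball_trans a b r1 r2 : b \in ball e a r1 -> ball e b r2 \subset ball e a (r1 + r2).
Proof.
move=> b_in; elim: r2 => [|r2 IH].
  by apply/subsetP=> y; rewrite /= inE => /eqP ->; rewrite addn0.
by rewrite addnS !ballS; apply: setUSS => //; apply: nbrS.
Qed.

Lemma path_ball u p : path e u p -> last u p \in ball e u (size p).
Proof.
elim/last_ind: p => [|p x IH]; first by rewrite /= inE.
rewrite rcons_path last_rcons size_rcons => /andP [pp ex].
by rewrite ballS !inE; apply/orP; right; apply/existsP; exists (last u p); rewrite IH.
Qed.

Lemma card_nbr (A : {set V}) : #|nbr A| <= maxdeg e * #|A|.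
Proof.
have -> : nbr A = \bigcup_(x in A) [set y | e x y].
  apply/setP=> y; rewrite inE; apply/existsP/bigcupP => [[x /andP [xA exy]]|[x xA]].
    by exists x; rewrite ?inE.
  by rewrite inE => exy; exists x; rewrite xA.
rewrite mulnC -sum_nat_const; elim/big_rec2: _ => [|x n U _ le_Un]; first by rewrite cards0.
apply: leq_trans (leq_card_setU _ _).1 (leq_add _ le_Un).
exact: (@leq_bigmax _ (fun v => #|[set u | e v u]|)).
Qed.

Lemma ballS_sub u r : ball e u r.+1 \subset u |: nbr (ball e u r).
Proof.
elim: r => [|r IH]; first by rewrite ballS.
rewrite ballS; apply/subUsetP; split; last exact: subsetUr.
exact/(subset_trans IH)/setUS/nbrS/sub_ball.
Qed.

(* Induction on the stronger bound [(D - 1) |B_r| + 1 <= D ^ (r + 1)]. *)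
Lemma card_ball u r : 2 <= maxdeg e -> #|ball e u r| < maxdeg e ^ r.+1.
Proof.
move=> D2; set D := maxdeg e.
suff key : D.-1 * #|ball e u r| + 1 <= D ^ r.+1.
  by apply: leq_trans key; rewrite addn1 ltnS leq_pmull // -ltnS prednK // ltnW.
elim: r => [|r IH]; first by rewrite /= cards1 muln1 expn1 addn1 prednK // ltnW.
have card_ballS : #|ball e u r.+1| <= 1 + D * #|ball e u r|.
  apply: leq_trans (subset_leq_card (ballS_sub u r)) _.
  by apply: leq_trans (leq_card_setU _ _).1 _; rewrite cards1 leq_add2l card_nbr.
rewrite expnS; apply: leq_trans (_ : D * (D.-1 * #|ball e u r| + 1) <= _); last first.
  by rewrite leq_mul2l IH orbT.
apply: leq_trans (_ : D.-1 * (1 + D * #|ball e u r|) + 1 <= _).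
  by rewrite leq_add2r leq_mul2l card_ballS orbT.
move: D2 (#|ball e u r|); rewrite -/D => D2 b; nia.
Qed.

Hypothesis Hcon : connected_graph e.
Local Notation dist := (gdist e).

Lemma mem_ball_card u v : v \in ball e u #|V|.-1.
Proof.
have /connectP [p pp ->] := Hcon u v.
case: (shortenP pp) => p' pp' up' _.
apply: (subsetP (sub_ball u _)) (path_ball pp').
by have := max_card (mem (u :: p')); rewrite (card_uniqP up') /=; case: #|V|.
Qed.

Lemma gdist_leq u v k : (dist u v <= k) = (v \in ball e u k).
Proof.
set P := fun j => v \in ball e u j.
have V_gt0 : 0 < #|V| by apply/card_gt0P; exists u.
have has_P : has P (iota 0 #|V|).
  apply/hasP; exists #|V|.-1; last exact: mem_ball_card.
  by rewrite mem_iota add0n prednK // leqnn.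
have d_lt : dist u v < #|V|.
  by have := has_find P (iota 0 #|V|); rewrite has_P size_iota => /esym/idP.
have Pd : P (dist u v) by have := nth_find 0 has_P; rewrite nth_iota // add0n.
apply/idP/idP => [d_le|Pk]; first exact: (subsetP (sub_ball u d_le)).
rewrite leqNgt; apply/negP => k_lt.
have := before_find 0 k_lt; rewrite nth_iota ?add0n; last exact: ltn_trans k_lt d_lt.
by rewrite /P Pk.
Qed.

Lemma gdist_lt_card u v : dist u v < #|V|.
Proof.
have V_gt0 : 0 < #|V| by apply/card_gt0P; exists u.
by rewrite -[#|V|]prednK // ltnS gdist_leq mem_ball_card.
Qed.

Lemma gdist_triangle a b c : dist a c <= dist a b + dist b c.
Proof. by rewrite gdist_leq; apply: (subsetP (ball_trans _ _)); rewrite -gdist_leq. Qed.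

Lemma gdist_eq0 u v : (dist u v == 0) = (u == v).
Proof. by rewrite -leqn0 gdist_leq /= inE eq_sym. Qed.

Lemma gdistxx u : dist u u = 0.
Proof. by apply/eqP; rewrite gdist_eq0. Qed.

Lemma gdist_edge u v : e u v -> dist u v <= 1.
Proof.
by move=> euv; rewrite gdist_leq ballS !inE; apply/orP; right; apply/existsP; exists u;
   rewrite inE eqxx.
Qed.

Lemma gdist_last_edge u v d : dist u v = d.+1 -> exists2 x, dist u x = d & e x v.
Proof.
move=> duv; have : v \in ball e u d.+1 by rewrite -gdist_leq duv.
rewrite ballS in_setU -gdist_leq duv ltnn /= inE => /existsP [x /andP [x_in exv]].
exists x => //; apply/eqP; rewrite eqn_leq gdist_leq x_in /= -ltnS -duv.
by apply: leq_trans (gdist_triangle u x v) _; rewrite -addn1 leq_add2l gdist_edge.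
Qed.

Hypothesis Hirr : irreflexive e.

Lemma gdist_eq1 u v : (dist u v == 1) = e u v.
Proof.
apply/idP/idP => [/eqP d1|euv].
  have : v \in ball e u 1 by rewrite -gdist_leq d1.
  rewrite ballS in_setU /= !inE => /orP [/eqP vu|/existsP [x]].
    by move: d1; rewrite vu gdistxx.
  by rewrite inE => /andP [/eqP ->].
rewrite eqn_leq gdist_edge //= lt0n gdist_eq0; apply/eqP => uv.
by move: euv; rewrite uv Hirr.
Qed.

End Distances.

Section BreadthFirstLayers.
Variables (V : finType) (e : rel V) (s : V).
Hypothesis Hcon : connected_graph e.
Local Notation dist := (gdist e).
Local Notation ds := (gdist e s).

Definition ancestor (a u : V) := dist a u + ds a = ds u.

Lemma gdist_root_edge x y : e x y -> ds y <= (ds x).+1.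
Proof.
move=> exy; apply: leq_trans (gdist_triangle Hcon s x y) _.
by rewrite -addn1 leq_add2l (gdist_edge Hcon).
Qed.

Lemma exists_ancestor u j : j <= ds u -> exists2 a, ds a = j & ancestor a u.
Proof.
rewrite /ancestor => le_ju; have : ds u = (ds u - j) + j by rewrite subnK.
move: (ds u - j) => d; elim: d u {le_ju} => [|d IH] u du.
  by exists u; rewrite // (gdistxx Hcon).
rewrite addSn in du; have [x dx exu] := gdist_last_edge Hcon du.
have [a da dax] := IH x dx; exists a => //.
apply/eqP; rewrite eqn_leq addnC (gdist_triangle Hcon) andbT.
have := gdist_triangle Hcon a x u; have := gdist_edge Hcon exu; lia.
Qed.

Lemma ancestor_trans a b c : ancestor a b -> ancestor b c -> ancestor a c.
Proof.
rewrite /ancestor => ab bc; apply/eqP; rewrite eqn_leq addnC (gdist_triangle Hcon) andbT.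
by have := gdist_triangle Hcon a b c; lia.
Qed.

Lemma connect_adj_ge_mono j j' x y :
  j <= j' -> connect (adj_ge e s j') x y -> connect (adj_ge e s j) x y.
Proof.
move=> le_jj'; apply: connect_sub => a b /and3P [eab a_ge b_ge]; apply: connect1.
by rewrite !inE in a_ge b_ge; rewrite /adj_ge eab !inE (leq_trans le_jj' a_ge) (leq_trans le_jj').
Qed.

Lemma connect_adj_ge0 x y : connect (adj_ge e s 0) x y.
Proof. by rewrite (@eq_connect _ _ e) // => a b; rewrite /adj_ge !inE !andbT. Qed.

Lemma ancestor_connect a u : ancestor a u -> connect (adj_ge e s (ds a)) a u.
Proof.
rewrite /ancestor; move: {2}(dist a u) (erefl (dist a u)) => d.
elim: d u => [|d IH] u.
  by move/eqP; rewrite (gdist_eq0 Hcon) => /eqP <- _; apply: connect0.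
move=> dau au; have [x dx exu] := gdist_last_edge Hcon dau.
have ax : dist a x + ds a = ds x.
  apply/eqP; rewrite eqn_leq addnC (gdist_triangle Hcon) andbT.
  by have := gdist_root_edge exu; rewrite -au; lia.
apply: connect_trans (IH x dx ax) (connect1 _).
by rewrite /adj_ge exu !inE -ax -au !leq_addl.
Qed.

Hypothesis Hsym : symmetric e.

Lemma connect_adj_ge_sym j : connect_sym (adj_ge e s j).
Proof.
apply: sym_connect_sym => x y; rewrite /adj_ge Hsym.
by case: (e y x); rewrite //= andbC.
Qed.

End BreadthFirstLayers.

Section Reconstruction.
Variables (V : finType) (L : nat -> {set V}) (l k : nat) (Gi : rel V) (TP : {set {set V}}).

Definition new_layer := k + l + 2.

Definition layer_of (y : V) := find (fun j => y \in L j) (iota 0 #|V|).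

Fixpoint desc_ball (a : V) (r : nat) : {set V} :=
  match r with
  | 0 => [set a]
  | r'.+1 => desc_ball a r' :|:
      [set y | [exists z in desc_ball a r', Gi z y && (layer_of y == (layer_of z).+1)]]
  end.

Definition part_of q := [set y | [exists P in TP, (q \in P) && (y \in P)]].

(* The subtree of [T_k] rooted at the part of [q], as the vertices of [G_i] reached from that
   part along shortest paths from the root. *)
Definition below_part q := [set u | [exists x in part_of q, u \in desc_ball x #|V|]].

Definition heavy (Cand : {set V}) q :=
  (layer_of q < k) && (#|Cand| < 2 * #|Cand :&: below_part q|).

Definition deepest_heavy Cand q :=
  heavy Cand q && [forall q', heavy Cand q' ==> (layer_of q' <= layer_of q)].

(* The vertices one layer below the part of [q] adjacent to it, which meet every child of that
   part in [T_k]; at the last layer [k - 1] of [T_k], the part itself. *)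
Definition probes q :=
  if (layer_of q).+1 == k then part_of q
  else [set y | (layer_of y == (layer_of q).+1) && [exists x in part_of q, Gi x y]].

Definition is_above (y v : V) (d : nat) := d + layer_of y == new_layer.

Fixpoint locate (v : V) (fuel : nat) (Cand : {set V}) : QAlg V {set V} :=
  match fuel with
  | 0 => Ret Cand
  | f.+1 =>
    match [pick q | deepest_heavy Cand q] with
    | None => Ret Cand
    | Some q =>
      bindQ (ask_filter is_above [seq (y, v) | y <- enum (probes q)]) (fun hits =>
        match hits with
        | (y, _) :: _ => if (layer_of y).+1 == k then Ret (Cand :&: below_part y)
                         else locate v f (Cand :&: below_part y)
        | [::] => locate v f (Cand :\: below_part q)
        end)
    end
  end.

Arguments locate : simpl never.

Definition lookup (vs : seq V) (rs : seq {set V}) (v : V) := nth set0 rs (index v vs).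

Definition candidate_pairs (region : V -> {set V}) :=
  flatten [seq [seq (u, v) | u <- enum (region v :|: [set w in L new_layer | region w == region v])]
          | v <- enum (L new_layer)].

Definition reconstruct : QAlg V (rel V) :=
  bindQ (mapQ (fun v => locate v #|V|.+1 (L new_layer.-1)) (enum (L new_layer))) (fun rs =>
  bindQ (ask_filter (fun _ _ d => d == 1) (candidate_pairs (lookup (enum (L new_layer)) rs)))
  (fun E1 => Ret (fun x y => Gi x y || ((x, y) \in E1) || ((y, x) \in E1)))).

Lemma mem_candidate_pairs region x y : ((x, y) \in candidate_pairs region) =
  (y \in L new_layer) && (x \in region y :|: [set w in L new_layer | region w == region y]).
Proof.
apply/flatten_mapP/andP => [[v v_in /mapP [u u_in [-> ->]]]|[y_in x_in]].
  by rewrite -mem_enum v_in -mem_enum.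
by exists y; rewrite ?mem_enum //; apply/mapP; exists x; rewrite ?mem_enum.
Qed.

Lemma size_candidate_pairs region : size (candidate_pairs region) =
  sumn [seq #|region v :|: [set w in L new_layer | region w == region v]|
       | v <- enum (L new_layer)].
Proof.
by rewrite size_flatten /shape -map_comp; congr sumn; apply: eq_map => v /=; rewrite size_map cardE.
Qed.

End Reconstruction.

Section Correctness.
Variables (V : finType) (e : rel V) (s : V) (l k : nat).
Hypotheses (Hsym : symmetric e) (Hirr : irreflexive e) (Hcon : connected_graph e).
Hypothesis Htl : tree_length_le e s l.

Local Notation dist := (gdist e).
Local Notation ds := (gdist e s).
Local Notation D := (maxdeg e).
Local Notation i := (new_layer l k).
Local Notation L := (layer e s).
Local Notation Gi := (G_ind e s i).
Local Notation TP := (Tk_parts e s k).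
Local Notation layer_of := (layer_of L).
Local Notation desc_ball := (desc_ball L Gi).
Local Notation part_of := (part_of TP).
Local Notation below_part := (below_part L Gi TP).
Local Notation heavy := (heavy L k Gi TP).
Local Notation probes := (probes L k Gi TP).
Local Notation ancestor := (ancestor e s).
Local Notation adj_ge_sym := (connect_adj_ge_sym s Hsym).

Lemma layer_of_gdist y : layer_of y = ds y.
Proof.
rewrite /layer_of (@eq_find _ _ (pred1 (ds y))); last by move=> j; rewrite /= inE eq_sym.
have := gdist_lt_card Hcon s y; move: (ds y) => d lt_d.
have lt_d' : d < size (iota 0 #|V|) by rewrite size_iota.
by have := index_uniq 0 lt_d' (iota_uniq 0 #|V|); rewrite nth_iota // add0n.
Qed.

Lemma sub_desc_ball a r r' : r <= r' -> desc_ball a r \subset desc_ball a r'.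
Proof.
move=> /subnK <-; elim: (r' - r) => [|d IH] //=.
exact: subset_trans IH (subsetUl _ _).
Qed.

Lemma desc_ball_ancestor a u r : u \in desc_ball a r -> ancestor a u.
Proof.
rewrite /ancestor; elim: r u => [|r IH] u /=; first by rewrite inE => /eqP ->; rewrite gdistxx.
rewrite in_setU => /orP [/IH //|]; rewrite inE => /existsP [z /andP [/IH az]].
case/andP => /and3P [ezu _ _]; rewrite !layer_of_gdist => /eqP du.
have := gdist_triangle Hcon a z u; have := gdist_edge Hcon ezu.
have := gdist_triangle Hcon s a u; lia.
Qed.

Lemma ancestor_desc_ball a u : ancestor a u -> ds u < i -> u \in desc_ball a #|V|.
Proof.
move=> au lt_ui; apply: (subsetP (sub_desc_ball a (ltnW (gdist_lt_card Hcon a u)))).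
have [d dau] : exists d, dist a u = d by exists (dist a u).
rewrite dau; elim: d u dau au lt_ui => [|d IH] u dau au lt_ui.
  by move/eqP: dau; rewrite (gdist_eq0 Hcon) => /eqP ->; rewrite /= inE.
have [x dx exu] := gdist_last_edge Hcon dau; move: au; rewrite /ancestor => au.
have dsu : ds u = (ds x).+1.
  by have := gdist_root_edge s Hcon exu; have := gdist_triangle Hcon s a x; lia.
have ax : ancestor a x by rewrite /ancestor; lia.
have lt_xi : ds x < i by rewrite dsu in lt_ui; apply: ltnW.
rewrite /= in_setU; apply/orP; right; rewrite inE; apply/existsP; exists x.
by rewrite IH // /G_ind exu !inE lt_ui lt_xi !layer_of_gdist dsu eqxx.
Qed.

Lemma Tk_parts_layer P : P \in TP -> exists2 j, j < k & P \in parts e s j.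
Proof. by move/bigcupP => [[j lt_jk] _ PP]; exists j. Qed.

Lemma mem_parts P j y : P \in parts e s j -> y \in P ->
  ds y = j /\ P = [set z | (ds z == j) && connect (adj_ge e s j) y z].
Proof.
rewrite /parts !inE => /andP [_ /imsetP [S /imsetP [x0 _ ->] ->]].
rewrite !inE => /andP [x0y /eqP dy]; split => //; apply/setP => z.
rewrite !inE andbC; congr (_ && _); apply/idP/idP; last exact: connect_trans.
by rewrite adj_ge_sym in x0y; apply: connect_trans.
Qed.

Lemma part_in_parts y j z : j <= ds y -> ds z = j -> connect (adj_ge e s j) y z ->
  [set z | (ds z == j) && connect (adj_ge e s j) y z] \in parts e s j.
Proof.
move=> le_jy dz yz; rewrite /parts !inE; apply/andP; split.
  by apply/set0Pn; exists z; rewrite !inE dz eqxx yz.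
apply/imsetP; exists [set z | connect (adj_ge e s j) y z].
  by apply/imsetP; exists y; rewrite // inE.
by apply/setP => z'; rewrite !inE andbC.
Qed.

Lemma part_ofE q : ds q < k ->
  part_of q = [set z | (ds z == ds q) && connect (adj_ge e s (ds q)) q z].
Proof.
move=> lt_qk; apply/setP => z; rewrite !inE; apply/existsP/idP => [[P /and3P [PT qP zP]]|zq].
  have [j _ Pj] := Tk_parts_layer PT; have [dq defP] := mem_parts Pj qP.
  by move: zP; rewrite defP inE dq.
exists [set z | (ds z == ds q) && connect (adj_ge e s (ds q)) q z].
rewrite !inE eqxx connect0 zq !andbT; apply/bigcupP; exists (Ordinal lt_qk) => //.
exact: (part_in_parts (leqnn _) (erefl _) (connect0 _ q)).
Qed.

Lemma part_of_parts q : ds q < k -> part_of q \in parts e s (ds q).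
Proof. by move=> lt_qk; rewrite part_ofE //; apply: (part_in_parts (leqnn _) (erefl _)). Qed.

Lemma mem_part_of q z : z \in part_of q -> ds z = ds q /\ connect (adj_ge e s (ds q)) q z.
Proof.
rewrite inE => /existsP [P /and3P [PT qP zP]].
have [j _ Pj] := Tk_parts_layer PT; have [dq defP] := mem_parts Pj qP.
by move: zP; rewrite defP inE dq => /andP [/eqP].
Qed.

Lemma part_of_ball q : ds q < k -> part_of q \subset ball e q l.
Proof.
move=> lt_qk; apply/subsetP => z zq; rewrite -(gdist_leq Hcon).
by apply: (Htl (part_of_parts lt_qk)) => //; rewrite part_ofE // inE eqxx connect0.
Qed.

Lemma below_part_connect y u : u \in below_part y -> connect (adj_ge e s (ds y)) y u.
Proof.
rewrite inE => /existsP [x /andP [/mem_part_of [dx yx] /desc_ball_ancestor xu]].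
by apply: connect_trans yx _; rewrite -dx; apply: ancestor_connect.
Qed.

Lemma below_partE y u : ds y < k -> ds y <= ds u -> ds u < i ->
  (u \in below_part y) = connect (adj_ge e s (ds y)) y u.
Proof.
move=> lt_yk le_yu lt_ui; apply/idP/idP; first exact: below_part_connect.
move=> yu; have [a da au] := exists_ancestor Hcon le_yu.
rewrite inE; apply/existsP; exists a; rewrite ancestor_desc_ball // andbT.
rewrite part_ofE // inE da eqxx /=; apply: connect_trans yu _.
by rewrite adj_ge_sym -da; apply: ancestor_connect.
Qed.

Hypothesis D2 : 2 <= D.

Lemma probes_card q : ds q < k -> #|probes q| <= D ^ (l + 2).
Proof.
move=> lt_qk; have card_q : #|part_of q| < D ^ l.+1.
  exact: leq_ltn_trans (subset_leq_card (part_of_ball lt_qk)) (card_ball _ _ D2).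
rewrite /probes; case: ifP => _.
  by apply: leq_trans (ltnW card_q) _; rewrite leq_pexp2l ?addn2 // ltnW.
apply: leq_trans (_ : #|nbr e (part_of q)| <= _).
  apply/subset_leq_card/subsetP => y; rewrite !inE => /andP [_ /existsP [x]].
  by case/andP => xq /and3P [exy _ _]; apply/existsP; exists x; rewrite xq.
apply: leq_trans (card_nbr _ _) _.
by rewrite addn2 expnS leq_mul2l ltnW // orbT.
Qed.

Lemma probes_layer q y : y \in probes q ->
  ds y = if (ds q).+1 == k then ds q else (ds q).+1.
Proof.
rewrite /probes !layer_of_gdist; case: ifP => _; first by case/mem_part_of.
by rewrite inE layer_of_gdist => /andP [/eqP].
Qed.

Lemma probe_exists q v : ds q < k -> ds v = i -> connect (adj_ge e s (ds q)) q v ->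
  exists2 y, y \in probes q & ancestor y v.
Proof.
move=> lt_qk dv qv.
have ancestor_part a : ds a = ds q -> ancestor a v -> a \in part_of q.
  move=> da av; rewrite part_ofE // inE da eqxx; apply: connect_trans qv _.
  by rewrite adj_ge_sym -da; apply: ancestor_connect.
rewrite /probes layer_of_gdist; case: ifP => last_q.
  have [|a da av] := exists_ancestor Hcon (_ : ds q <= ds v); first by rewrite dv /new_layer; lia.
  by exists a => //; apply: ancestor_part.
have [|a da av] := exists_ancestor Hcon (_ : (ds q).+1 <= ds v).
  by rewrite dv /new_layer; lia.
have [|p dp pa] := exists_ancestor Hcon (_ : ds q <= ds a); first by rewrite da.
exists a => //; rewrite inE !layer_of_gdist da eqxx /=; apply/existsP; exists p.
rewrite ancestor_part ?dp //=; last exact: ancestor_trans pa av.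
have epa : e p a.
  by rewrite -(gdist_eq1 Hcon Hirr); apply/eqP; move: pa; rewrite /ancestor dp da; lia.
by rewrite /G_ind epa !inE dp da /new_layer; lia.
Qed.

Definition region v := [set u | (ds u == i.-1) && connect (adj_ge e s k.-1) v u].

Lemma region_neq0 v : ds v = i -> exists u, u \in region v.
Proof.
move=> dv; have [|a da av] := exists_ancestor Hcon (_ : i.-1 <= ds v); first by rewrite dv leq_pred.
exists a; rewrite inE da eqxx adj_ge_sym /=.
apply: (@connect_adj_ge_mono _ _ _ _ (ds a)); last exact: ancestor_connect.
by rewrite da /new_layer; lia.
Qed.

Lemma region_sub_below_part y v : ds y < k -> ds v = i -> ancestor y v ->
  region v \subset below_part y.
Proof.
move=> lt_yk dv yv; apply/subsetP => u; rewrite inE => /andP [/eqP du vu].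
rewrite below_partE // ?du /new_layer; try lia.
apply: connect_trans (ancestor_connect Hcon yv) _.
by apply: connect_adj_ge_mono vu; lia.
Qed.

Lemma region_sub_below_partC q v (Cand : {set V}) : ds q < k -> ds v = i ->
  (forall y, y \in probes q -> ~ ancestor y v) ->
  region v \subset Cand -> region v \subset Cand :\: below_part q.
Proof.
move=> lt_qk dv no_probe regC; apply/subsetP => u u_reg.
rewrite inE (subsetP regC) // andbT; apply/negP => /below_part_connect qu.
move: u_reg; rewrite inE => /andP [_ vu].
have qv : connect (adj_ge e s (ds q)) q v.
  by apply: connect_trans qu _; rewrite adj_ge_sym; apply: connect_adj_ge_mono vu; lia.
by have [y /no_probe] := probe_exists lt_qk dv qv.
Qed.

Lemma region_leaf y v (Cand : {set V}) : (ds y).+1 = k -> ds v = i -> ancestor y v ->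
  Cand \subset L i.-1 -> region v \subset Cand -> Cand :&: below_part y = region v.
Proof.
move=> yk dv yv CandL regC; apply/eqP; rewrite eqEsubset subsetI regC.
rewrite region_sub_below_part ?yk // !andbT; apply/subsetP => u /setIP [uC /below_part_connect yu].
have := subsetP CandL u uC; rewrite !inE => ->; rewrite -yk /=.
by apply: connect_trans yu; rewrite adj_ge_sym; apply: ancestor_connect.
Qed.

Lemma no_deepest_heavy (Cand : {set V}) : deepest_heavy L k Gi TP Cand =1 xpred0 ->
  Cand \subset L i.-1 -> Cand != set0 -> k = 0.
Proof.
move=> none CandL Cand_neq0; case: (posnP k) => // k_gt0.
have heavy_s : heavy Cand s.
  rewrite /heavy layer_of_gdist gdistxx // k_gt0 /=.
  have -> : Cand :&: below_part s = Cand.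
    apply/setIidPl/subsetP => u uC; have := subsetP CandL u uC; rewrite inE => /eqP du.
    by rewrite below_partE ?gdistxx ?du ?connect_adj_ge0 // /new_layer; lia.
  by rewrite mul2n -addnn -addn1 leq_add2l card_gt0.
case: (arg_maxnP layer_of heavy_s) => q heavy_q deepest_q.
move: (none q); rewrite /deepest_heavy heavy_q /= => /negbT/forallPn [q'].
by rewrite negb_imply => /andP [/deepest_q]; lia.
Qed.

Lemma mem_probe_hits q v y w : ds v = i ->
  ((y, w) \in [seq p <- [seq (y, v) | y <- enum (probes q)]
               | is_above L l k p.1 p.2 (dist p.1 p.2)])
  = [&& w == v, y \in probes q & dist y v + ds y == ds v].
Proof.
move=> dv; rewrite mem_filter /is_above /= layer_of_gdist dv.
apply/andP/and3P => [[/[swap] /mapP [y' y'q [-> ->]] yw]|[/eqP -> yq yv]].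
  by rewrite mem_enum in y'q; rewrite eqxx y'q.
by rewrite yv map_f ?mem_enum.
Qed.

Lemma probe_lt q y : ds q < k -> y \in probes q -> ds y < k.
Proof. by move=> lt_qk /probes_layer ->; case: ifP => /eqP; lia. Qed.

Lemma child_not_heavy (Cand : {set V}) q y : deepest_heavy L k Gi TP Cand q ->
  y \in probes q -> (ds y).+1 != k -> 2 * #|Cand :&: below_part y| <= #|Cand|.
Proof.
case/andP => /andP [lt_qk _] deepest_q yq not_leaf; rewrite layer_of_gdist in lt_qk.
have dy : ds y = (ds q).+1.
  by move: not_leaf; rewrite (probes_layer yq); case: ifP => [/eqP -> /eqP|].
rewrite leqNgt; apply/negP => heavy_y; have := implyP (forallP deepest_q y).
by rewrite /heavy heavy_y !layer_of_gdist (probe_lt lt_qk yq) dy ltnn => /(_ isT).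
Qed.

Lemma locate_spec v f (Cand : {set V}) : ds v = i -> Cand \subset L i.-1 ->
  region v \subset Cand -> trunc_log 2 #|Cand| < f ->
  let r := run dist (locate L l k Gi TP v f Cand) in
  r.1 = region v /\ r.2 <= D ^ (l + 2) * (trunc_log 2 #|Cand|).+1.
Proof.
move=> dv; elim: f Cand => [|f IH] Cand CandL regC lt_f //=.
have reg_gt0 (C : {set V}) : region v \subset C -> 0 < #|C|.
  move=> regC'; have [u u_reg] := region_neq0 dv.
  by apply/card_gt0P; exists u; apply: (subsetP regC').
(* Each round at least halves the candidate set, which pays for its probes. *)
have recurse (C : {set V}) : C \subset Cand -> region v \subset C -> 2 * #|C| <= #|Cand| ->
    let r := run dist (locate L l k Gi TP v f C) in
    r.1 = region v /\ D ^ (l + 2) + r.2 <= D ^ (l + 2) * (trunc_log 2 #|Cand|).+1.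
  move=> CCand regC' half /=; have lt_log := trunc_log2_half (reg_gt0 _ regC') half.
  have [-> cost] := IH C (subset_trans CCand CandL) regC' (leq_trans lt_log lt_f).
  split=> //; rewrite mulnS leq_add2l; apply: leq_trans cost _.
  by rewrite leq_mul2l lt_log orbT.
case: pickP => [q deepest_q | none] /=; last first.
  have k0 : k = 0 by apply: no_deepest_heavy none CandL _; rewrite -card_gt0 reg_gt0.
  split=> //; apply/eqP; rewrite eqEsubset regC andbT; apply/subsetP => u uC.
  by have := subsetP CandL u uC; rewrite !inE => ->; rewrite k0; apply: connect_adj_ge0.
have /andP [/andP [lt_qk heavy_q] _] := deepest_q; rewrite layer_of_gdist in lt_qk.
have probes_q := probes_card lt_qk.
rewrite run_bind run_ask_filter /= size_map -cardE.
case hits: [seq p <- _ | _] => [|[y w] hits'].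
  have miss y : y \in probes q -> ~ ancestor y v.
    by move=> yq yv; have := mem_probe_hits q y v dv; rewrite hits eqxx yq yv eqxx.
  have half : 2 * #|Cand :\: below_part q| <= #|Cand|.
    by move: heavy_q; rewrite cardsD; lia.
  have [-> cost] := recurse _ (subsetDl _ _) (region_sub_below_partC lt_qk dv miss regC) half.
  by split=> //; apply: leq_trans cost; rewrite leq_add2r.
have := mem_head (y, w) hits'; rewrite -hits mem_probe_hits // => /and3P [_ yq /eqP yv].
have lt_yk := probe_lt lt_qk yq.
rewrite layer_of_gdist; case: ifP => [/eqP leaf | /negbT not_leaf].
  split; first exact: region_leaf.
  by rewrite addn0; apply: leq_trans probes_q _; rewrite leq_pmulr.
have regC' : region v \subset Cand :&: below_part y.
  by rewrite subsetI regC region_sub_below_part.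
have [-> cost] := recurse _ (subsetIl _ _) regC' (child_not_heavy deepest_q yq not_leaf).
by split=> //; apply: leq_trans cost; rewrite leq_add2r.
Qed.

Lemma locate_region v : ds v = i ->
  let r := run dist (locate L l k Gi TP v #|V|.+1 (L i.-1)) in
  r.1 = region v /\ r.2 <= D ^ (l + 2) * (trunc_log 2 #|V|).+1.
Proof.
move=> dv /=; have reg_sub : region v \subset L i.-1.
  by apply/subsetP => u; rewrite !inE => /andP [].
have log_lt : trunc_log 2 #|L i.-1| < #|V|.+1.
  by rewrite ltnS; apply: leq_trans (trunc_log2_leq _) (max_card _).
have [-> cost] := locate_spec dv (subxx _) reg_sub log_lt.
split=> //; apply: leq_trans cost _.
by rewrite leq_mul2l ltnS leq_trunc_log ?max_card ?orbT.
Qed.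

Lemma region_card v : ds v = i -> #|region v| < D ^ (2 * l + 3).
Proof.
move=> dv; have le_kv : k.-1 <= ds v by rewrite dv /new_layer; lia.
have [x0 dx0 x0v] := exists_ancestor Hcon le_kv.
have vx0 : connect (adj_ge e s k.-1) v x0 by rewrite adj_ge_sym -dx0; apply: ancestor_connect.
have part_x0 := part_in_parts le_kv dx0 vx0.
have -> : 2 * l + 3 = (2 * l + 2).+1 by lia.
apply: leq_ltn_trans (card_ball x0 _ D2).
(* Every vertex of the region hangs below the part of [v] at layer [k - 1], of diameter [<= l]. *)
apply/subset_leq_card/subsetP => u; rewrite inE => /andP [/eqP du vu].
have [|a da au] := exists_ancestor Hcon (_ : k.-1 <= ds u); first by rewrite du /new_layer; lia.
have va : connect (adj_ge e s k.-1) v a.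
  by apply: connect_trans vu _; rewrite adj_ge_sym -da; apply: ancestor_connect.
have x0a : dist x0 a <= l by apply: (Htl part_x0); rewrite inE ?dx0 ?da eqxx.
rewrite -(gdist_leq Hcon); apply: leq_trans (gdist_triangle Hcon x0 a u) _.
by move: au; rewrite /ancestor du da /new_layer; lia.
Qed.

Definition twins v := [set w in L i | region w == region v].

Lemma twins_card v : ds v = i -> #|twins v| <= D ^ (2 * l + 4).
Proof.
move=> dv; apply: leq_trans (_ : #|nbr e (region v)| <= _); last first.
  have -> : 2 * l + 4 = (2 * l + 3).+1 by lia.
  apply: leq_trans (card_nbr _ _) _; rewrite expnS.
  by rewrite leq_mul2l ltnW ?orbT ?region_card.
apply/subset_leq_card/subsetP => w; rewrite !inE => /andP [/eqP dw /eqP reg_w].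
have [|p dp pw] := exists_ancestor Hcon (_ : i.-1 <= ds w); first by rewrite dw leq_pred.
apply/existsP; exists p; apply/andP; split.
  rewrite -reg_w inE dp eqxx adj_ge_sym /=; apply: connect_adj_ge_mono (ancestor_connect Hcon pw).
  by rewrite dp /new_layer; lia.
by rewrite -(gdist_eq1 Hcon Hirr); apply/eqP; move: pw; rewrite /ancestor dw dp /new_layer; lia.
Qed.

Lemma candidates_card v : ds v = i -> #|region v :|: twins v| <= 2 * D ^ (4 * l + 8).
Proof.
move=> dv; apply: leq_trans (leq_card_setU _ _).1 _; rewrite mul2n -addnn leq_add //.
  apply: leq_trans (ltnW (region_card dv)) _; rewrite leq_pexp2l ?(ltnW D2) //; lia.
by apply: leq_trans (twins_card dv) _; rewrite leq_pexp2l ?(ltnW D2) //; lia.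
Qed.

Lemma new_edge_candidates x y : ds y = i -> ds x <= i -> e x y -> x \in region y :|: twins y.
Proof.
move=> dy le_xi exy.
have le_ix : i <= (ds x).+1 by rewrite -dy; exact: (gdist_root_edge s Hcon exy).
have yx : connect (adj_ge e s k.-1) y x.
  by apply: connect1; rewrite /adj_ge -Hsym exy !inE dy /new_layer in le_ix *; lia.
have [dx|dx] := eqVneq (ds x) i.
  apply/setUP; right; rewrite /twins !inE dx eqxx; apply/eqP/setP => u; rewrite !inE.
  congr (_ && _); apply/idP/idP; first exact: connect_trans.
  by apply: connect_trans; rewrite adj_ge_sym.
by apply/setUP; left; rewrite inE yx andbT; apply/eqP; lia.
Qed.

Lemma G_ind_succ x y : G_ind e s i.+1 x y =
  [|| Gi x y, [&& y \in L i, x \in region y :|: twins y & e x y]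
    | [&& x \in L i, y \in region x :|: twins x & e y x]].
Proof.
have cand_layer (u v : V) : u \in region v :|: twins v -> ds u <= i.
  by rewrite !inE => /orP [] /andP [/eqP -> _] //; apply: leq_pred.
apply/idP/idP => [/and3P [exy lt_x lt_y]|].
  rewrite !inE !ltnS in lt_x lt_y; have [dy|dy] := eqVneq (ds y) i.
    by apply/or3P/Or32; rewrite inE dy eqxx new_edge_candidates.
  have [dx|dx] := eqVneq (ds x) i.
    by apply/or3P/Or33; rewrite inE dx eqxx new_edge_candidates // Hsym.
  by apply/or3P/Or31; rewrite /G_ind exy !inE; apply/andP; split; lia.
case/or3P => [|/and3P [dy /cand_layer le_xi exy]|/and3P [dx /cand_layer le_yi eyx]];
  rewrite /G_ind !inE ?ltnS.
- by case/and3P => -> lt_x lt_y; rewrite ltnW // ltnW.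
- by rewrite inE in dy; rewrite exy le_xi (eqP dy) leqnn.
- by rewrite inE in dx; rewrite Hsym eyx le_yi (eqP dx) leqnn.
Qed.

Lemma reconstruct_spec : let r := run dist (reconstruct L l k Gi TP) in
  r.1 =2 G_ind e s i.+1 /\
  r.2 <= #|L i| * (D ^ (l + 2) * (trunc_log 2 #|V|).+1 + 2 * D ^ (4 * l + 8)).
Proof.
rewrite /reconstruct run_bind run_mapQ /= run_bind run_ask_filter /= addn0.
set vs := enum (L i).
have located v : v \in vs ->
    let r := run dist (locate L l k Gi TP v #|V|.+1 (L i.-1)) in
    r.1 = region v /\ r.2 <= D ^ (l + 2) * (trunc_log 2 #|V|).+1.
  by rewrite mem_enum inE => /eqP; apply: locate_region.
set rs := [seq _ | v <- vs].
have lookupE v : v \in vs -> lookup vs rs v = region v.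
  by move=> v_in; rewrite /lookup (nth_map v) ?index_mem // nth_index //; case: (located v v_in).
have twinsE v : v \in vs -> [set w in L i | lookup vs rs w == lookup vs rs v] = twins v.
  move=> v_in; apply/setP => w; rewrite !inE; case w_in: (_ == i) => //=.
  by rewrite !lookupE // /vs mem_enum inE w_in.
have candE v u :
    (v \in L i) && (u \in lookup vs rs v :|: [set w in L i | lookup vs rs w == lookup vs rs v])
    = (v \in L i) && (u \in region v :|: twins v).
  case v_in: (v \in L i) => //=.
  have v_vs : v \in vs by rewrite /vs mem_enum.
  by rewrite twinsE // lookupE.
split.
  move=> x y; rewrite G_ind_succ !mem_filter /= !mem_candidate_pairs !candE !(gdist_eq1 Hcon Hirr).
  by rewrite [e x y && _]andbC [e y x && _]andbC !andbA orbA.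
rewrite size_candidate_pairs mulnDr [#|L i|]cardE -/vs; apply: leq_add.
  by apply: sumn_map_leq => v /located [].
apply: sumn_map_leq => v v_in; rewrite twinsE // lookupE //.
by apply: candidates_card; move: v_in; rewrite mem_enum inE => /eqP.
Qed.

End Correctness.

Lemma INR_expn m t : INR (m ^ t) = pow (INR m) t.
Proof. by elim: t => [|t IH] //; rewrite expnS mult_INR IH. Qed.

Lemma ln_le (x y : R) : Rlt 0 x -> Rle x y -> Rle (ln x) (ln y).
Proof. by move=> x_gt0 [lt_xy|<-]; [apply/Rlt_le/ln_increasing | apply: Rle_refl]. Qed.

Lemma trunc_log2_ln n : 2 <= n -> Rle (INR (trunc_log 2 n).+1) (Rmult 4 (ln (INR n))).
Proof.
move=> n2; set t := trunc_log 2 n.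
have INR2_gt0 : Rlt 0 (INR 2) by apply/lt_0_INR/ltP.
have t_ln : Rle (Rmult (INR t) (ln (INR 2))) (ln (INR n)).
  rewrite -ln_pow // -INR_expn; apply: ln_le; first by apply/lt_0_INR/ltP; rewrite expn_gt0.
  by apply/le_INR/leP; apply: trunc_logP => //; apply: leq_trans n2.
have ln2_n : Rle (ln (INR 2)) (ln (INR n)) by apply: ln_le => //; apply/le_INR/leP.
have ln2 : ln (INR 2) = ln 2 by rewrite INR_IZR_INZ.
have := ln_lt_2; have := pos_INR t; rewrite S_INR -ln2; nra.
Qed.

Definition reconstruction_procedure : Procedure := fun n inp =>
  reconstruct (in_layers inp) (in_ell inp) (in_k inp) (in_Gi inp) (in_Tparts inp).

Theorem mainTheorem6 :
  exists (C : R) (A : Procedure),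
  forall (n : nat) (e : rel 'I_n) (s : 'I_n) (l k : nat),
    simple_graph e -> connected_graph e -> 2 <= n -> 2 <= maxdeg e ->
    tree_length_le e s l ->
    let i := k + l + 2 in
    let inp := mkInput l k (layer e s) (G_ind e s i)
                 (Tk_parts e s k) (Tk_edge e s k) in
    let r := run (gdist e) (A n inp) in
    r.1 =2 G_ind e s i.+1 /\
    Rle (INR r.2) (query_bound C n #|layer e s i| (maxdeg e) l).
Proof.
exists (IZR 4), reconstruction_procedure => n e s l k [Hsym Hirr] Hcon n2 D2 Htl i inp r.
have [edges cost] := reconstruct_spec k Hsym Hirr Hcon Htl D2.
split; first exact: edges.
rewrite card_ord in cost; rewrite /query_bound.
set Li := #|layer e s i|; set a := maxdeg e ^ (l + 2); set b := maxdeg e ^ (4 * l + 8).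
have cost_r : (r.2 <= Li * (a * (trunc_log 2 n).+1 + 2 * b))%N := cost.
have := le_INR _ _ (leP cost_r); rewrite !mult_INR plus_INR !mult_INR [INR 2]/=.
have log_ln := Rmult_le_compat_l _ _ _ (pos_INR a) (trunc_log2_ln n2).
have inner : Rle (Rplus (Rmult (INR a) (INR (trunc_log 2 n).+1)) (Rmult (Rplus 1 1) (INR b)))
                 (Rmult 4 (Rplus (Rmult (INR a) (ln (INR n))) (INR b))).
  by have := pos_INR b; lra.
have := Rmult_le_compat_l _ _ _ (pos_INR Li) inner; lra.
Qed.
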